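(* As $n\to\infty$, $$\mathbb{E}[Z_n^2]=4(n\log n)^2+8\gamma\,n^2\log n+\left(16+4\gamma^2-\frac{2\pi^2}{3}\right)n^2+O(n^{3/2}),$$ and $$\operatorname{Var}[Z_n]=\left(16-\frac{2\pi^2}{3}\right)n^2+O(n^{3/2}),$$ where $\gamma$ is Euler's constant.
   Context: Consider the random sequence of trees $(T_n)_{n\ge1}$ with node labels $1,\dots,n$ defined as follows: $T_1$ is a single node labeled $1$; $T_2$ consists of nodes $1,2$ joined by an edge; for $n\ge3$, $T_n$ is obtained from $T_{n-1}$ by adding a node labeled $n$ and an edge joining it to a node $i\in\{1,\dots,n-1\}$ chosen, conditionally on $T_1,\dots,T_{n-1}$, with probability $D_{n-1,i}/(2(n-2))$, where $D_{m,i}$ is the degree of node $i$ in $T_m$. The Zagreb index of $T_n$ is $Z_n=\sum_{j=1}^n D_{n,j}^2$. *)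

From Stdlib Require Import Reals List.
Open Scope R_scope.

(* A tree T_m on nodes 1..m is represented (for the purpose of the
   distribution of degrees) by its degree list d = [D_{m,1}; ...; D_{m,m}]
   (node j is at index j-1). The attachment process only depends on it. *)

Fixpoint rsum (n : nat) (f : nat -> R) : R :=
  match n with
  | O => 0
  | S k => rsum k f + f k
  end.

Fixpoint incr_at (d : list nat) (i : nat) : list nat :=
  match d, i with
  | nil, _ => nil
  | x :: r, O => S x :: r
  | x :: r, S j => x :: incr_at r j
  end.

Definition attach (d : list nat) (i : nat) : list nat :=
  incr_at d i ++ (1%nat :: nil).

(* expect k d f = E[ f(degree list after k further steps) ] starting from a
   tree with degree list d (m = length d nodes).  One step chooses node
   i+1 with probability D_{m,i+1} / (2(m-1)). *)
Fixpoint expect (k : nat) (d : list nat) (f : list nat -> R) : R :=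
  match k with
  | O => f d
  | S k' =>
      rsum (length d) (fun i =>
        (INR (nth i d 0%nat) / (2 * (INR (length d) - 1))) *
        expect k' (attach d i) f)
  end.

Definition zagreb (d : list nat) : R :=
  fold_right (fun x acc => INR x ^ 2 + acc) 0 d.

(* E[g(T_n)] for n >= 2, starting from T_2 (two nodes of degree 1). *)
Definition En (n : nat) (g : list nat -> R) : R :=
  expect (n - 2) (1%nat :: 1%nat :: nil) g.

Definition EZ (n : nat) : R := En n zagreb.
Definition EZ2 (n : nat) : R := En n (fun d => zagreb d ^ 2).
Definition VarZ (n : nat) : R := EZ2 n - (EZ n) ^ 2.

Definition harmonic (n : nat) : R := rsum n (fun k => / INR (S k)).

Definition is_euler_gamma (g : R) : Prop :=
  Un_cv (fun n => harmonic n - ln (INR n)) g.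

From Stdlib Require Import Reals Lra Lia List.
From Coquelicot Require Import Coquelicot.
Open Scope R_scope.

(* Write [S_k] for the sum of the [k]-th powers of the degrees, so [Z_n = S_2].
   Attaching to a node of degree [x], chosen with probability [x / (2 (m - 1))],
   increases [S_2] by [2 x + 2] and [S_3] by [3 x^2 + 3 x + 2]; hence the
   expectations of [S_2], [S_3] and [S_2^2] satisfy first-order linear
   recurrences in [n], whose solutions are explicit in the harmonic numbers
   [H_n], [H2_n = sum_(k <= n) 1/k^2] and a Gamma-function ratio of order
   [n^(3/2)].  In [Var Z_n] the terms [n^2 H_n^2] cancel, so at order [n^2]
   only [H2_n = PI^2/6 + O(1/n)] survives; for [E[Z_n^2]] one adds
   [E[Z_n]^2] with [H_n = ln n + gamma + O(1/n)]. *)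

Lemma rsum_ext n f g : (forall i, (i < n)%nat -> f i = g i) -> rsum n f = rsum n g.
Proof.
  induction n as [|n IH]; intros H; simpl; [reflexivity|].
  rewrite IH, H; [reflexivity | lia | intros i Hi; apply H; lia].
Qed.

Lemma rsum_plus n f g : rsum n (fun i => f i + g i) = rsum n f + rsum n g.
Proof. induction n as [|n IH]; simpl; [lra|]. rewrite IH. ring. Qed.

Lemma rsum_scal n c f : rsum n (fun i => c * f i) = c * rsum n f.
Proof. induction n as [|n IH]; simpl; [lra|]. rewrite IH. ring. Qed.

Lemma rsum_S_l n f : rsum (S n) f = f 0%nat + rsum n (fun i => f (S i)).
Proof. induction n as [|n IH]; simpl in *; [lra|]. rewrite IH. ring. Qed.

Lemma harmonic_S n : harmonic (S n) = harmonic n + / (INR n + 1).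
Proof. unfold harmonic. cbn [rsum]. rewrite S_INR. reflexivity. Qed.

Lemma harmonic_ge0 n : 0 <= harmonic n.
Proof.
  induction n as [|n IH]; [unfold harmonic; simpl; lra|].
  rewrite harmonic_S. pose proof (pos_INR n).
  assert (0 < / (INR n + 1)) by (apply Rinv_0_lt_compat; lra). lra.
Qed.

Definition harmonic2 (n : nat) : R := rsum n (fun k => / INR (S k) ^ 2).

Lemma harmonic2_S n : harmonic2 (S n) = harmonic2 n + / (INR n + 1) ^ 2.
Proof. unfold harmonic2. cbn [rsum]. rewrite S_INR. reflexivity. Qed.

Definition lsum (w : nat -> R) (d : list nat) : R := fold_right (fun x acc => w x + acc) 0 d.

Lemma rsum_nth_lsum w d : rsum (length d) (fun i => w (nth i d 0%nat)) = lsum w d.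
Proof.
  induction d as [|x d IH]; [reflexivity|].
  change (rsum (S (length d)) (fun i => w (nth i (x :: d) 0%nat)) = w x + lsum w d).
  rewrite rsum_S_l. simpl. rewrite IH. reflexivity.
Qed.

Lemma lsum_plus v w d : lsum (fun x => v x + w x) d = lsum v d + lsum w d.
Proof. induction d as [|x d IH]; simpl; [lra|]. rewrite IH. ring. Qed.

Lemma lsum_scal c w d : lsum (fun x => c * w x) d = c * lsum w d.
Proof. induction d as [|x d IH]; simpl; [lra|]. rewrite IH. ring. Qed.

Lemma lsum_incr_at w d i : (i < length d)%nat ->
  lsum w (incr_at d i) = lsum w d + w (S (nth i d 0%nat)) - w (nth i d 0%nat).
Proof.
  revert i; induction d as [|x d IH]; intros [|i] Hi; simpl in *; try lia; [lra|].
  rewrite IH by lia. ring.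
Qed.

Lemma lsum_attach w d i : (i < length d)%nat ->
  lsum w (attach d i) = lsum w d + w (S (nth i d 0%nat)) - w (nth i d 0%nat) + w 1%nat.
Proof.
  intros Hi. unfold attach. rewrite <- lsum_incr_at by exact Hi.
  induction (incr_at d i) as [|x e IH]; simpl; [lra|]. rewrite IH. ring.
Qed.

Lemma length_attach d i : length (attach d i) = S (length d).
Proof.
  unfold attach. rewrite length_app. simpl. rewrite Nat.add_1_r. f_equal.
  revert i; induction d as [|x d IH]; intros [|i]; simpl; auto.
Qed.

Definition pow_sum (k : nat) (d : list nat) : R := lsum (fun x => INR x ^ k) d.

Lemma pow_sum_attach k d i : (i < length d)%nat ->
  pow_sum k (attach d i)
  = pow_sum k d + (INR (nth i d 0%nat) + 1) ^ k - INR (nth i d 0%nat) ^ k + 1.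
Proof. intros Hi. unfold pow_sum. rewrite lsum_attach, S_INR, pow1 by exact Hi. reflexivity. Qed.

(** * Exact moments of the Zagreb index *)

Lemma expect_plus k d f g : expect k d (fun e => f e + g e) = expect k d f + expect k d g.
Proof.
  revert d; induction k as [|k IH]; intros d; simpl; [reflexivity|].
  rewrite <- rsum_plus. apply rsum_ext. intros i _. rewrite IH. ring.
Qed.

Lemma expect_scal k d c f : expect k d (fun e => c * f e) = c * expect k d f.
Proof.
  revert d; induction k as [|k IH]; intros d; simpl; [reflexivity|].
  rewrite <- rsum_scal. apply rsum_ext. intros i _. rewrite IH. ring.
Qed.

Lemma expect_mul_length k d c f :
  expect k d (fun e => c (length e) * f e) = c (length d + k)%nat * expect k d f.
Proof.
  revert d; induction k as [|k IH]; intros d; simpl.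
  - rewrite Nat.add_0_r. reflexivity.
  - rewrite <- rsum_scal. apply rsum_ext. intros i _.
    rewrite IH, length_attach, Nat.add_succ_comm. ring.
Qed.

Lemma expect_S_r k d f : expect (S k) d f = expect k d (fun e => expect 1 e f).
Proof.
  revert d; induction k as [|k IH]; intros d; [reflexivity|].
  change (expect (S (S k)) d f) with
    (rsum (length d) (fun i => INR (nth i d 0%nat) / (2 * (INR (length d) - 1))
                               * expect (S k) (attach d i) f)).
  simpl expect at 2. apply rsum_ext. intros i _. rewrite IH. reflexivity.
Qed.

Definition handshake (d : list nat) : Prop :=
  (2 <= length d)%nat /\ pow_sum 1 d = 2 * (INR (length d) - 1).

Lemma handshake_length e : handshake e -> 1 < INR (length e).
Proof. intros [He _]. apply (lt_INR 1). lia. Qed.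

Lemma handshake_attach d i : handshake d -> (i < length d)%nat -> handshake (attach d i).
Proof.
  intros [Hlen Hsum] Hi. split; rewrite length_attach; [lia|].
  rewrite pow_sum_attach, Hsum, S_INR by exact Hi. ring.
Qed.

Lemma expect_ext_handshake k d f g : handshake d ->
  (forall e, handshake e -> f e = g e) -> expect k d f = expect k d g.
Proof.
  revert d; induction k as [|k IH]; intros d Hd Hfg; simpl; [apply Hfg, Hd|].
  apply rsum_ext. intros i Hi. rewrite (IH _ (handshake_attach d i Hd Hi) Hfg). reflexivity.
Qed.

(* The handshake identity makes the attachment probabilities sum to [1]. *)
Lemma expect_one_quadratic d F a b c : handshake d ->
  (forall i, (i < length d)%nat ->
     F (attach d i) = a + b * INR (nth i d 0%nat) + c * INR (nth i d 0%nat) ^ 2) ->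
  expect 1 d F = a + (b * pow_sum 2 d + c * pow_sum 3 d) / (2 * (INR (length d) - 1)).
Proof.
  intros Hd HF. pose proof (handshake_length d Hd) as Hm. destruct Hd as [_ Hsum]. simpl.
  set (D := 2 * (INR (length d) - 1)).
  pose (w := fun x => a / D * INR x ^ 1 + (b / D * INR x ^ 2 + c / D * INR x ^ 3)).
  transitivity (rsum (length d) (fun i => w (nth i d 0%nat))).
  - apply rsum_ext. intros i Hi. rewrite HF by exact Hi. unfold w, D. field. lra.
  - rewrite rsum_nth_lsum. unfold w. rewrite !lsum_plus, !lsum_scal.
    fold (pow_sum 1 d) (pow_sum 2 d) (pow_sum 3 d). rewrite Hsum. unfold D. field. lra.
Qed.

Lemma expect_const k d c : handshake d -> expect k d (fun _ => c) = c.
Proof.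
  revert d; induction k as [|k IH]; intros d Hd; [reflexivity|].
  rewrite expect_S_r, (expect_ext_handshake k d _ (fun _ => c) Hd); [apply IH, Hd|].
  intros e He. pose proof (handshake_length e He).
  rewrite (expect_one_quadratic e _ c 0 0 He) by (intros; ring). field. lra.
Qed.

Definition T2 : list nat := 1%nat :: 1%nat :: nil.

Lemma handshake_T2 : handshake T2.
Proof. split; [simpl; lia | unfold pow_sum, lsum; simpl; lra]. Qed.

(* After [k] steps from [T2] there are [k + 2] nodes, so [m - 1 = k + 1]. *)
Lemma expect_S_drift k f g h :
  (forall e, handshake e -> expect 1 e f = h e + g e / (INR (length e) - 1)) ->
  expect (S k) T2 f = expect k T2 h + expect k T2 g / (INR k + 1).
Proof.
  intros Hstep.
  rewrite expect_S_r, (expect_ext_handshake k T2 _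
    (fun e => h e + (fun m => / (INR m - 1)) (length e) * g e) handshake_T2)
    by (intros e He; rewrite Hstep by exact He; cbv beta; unfold Rdiv; ring).
  rewrite expect_plus, (expect_mul_length k T2 (fun m => / (INR m - 1)) g). cbv beta.
  rewrite plus_INR. simpl INR. pose proof (pos_INR k). field. lra.
Qed.

Lemma expect_one_pow_sum_2 e : handshake e ->
  expect 1 e (pow_sum 2) = (pow_sum 2 e + 2) + pow_sum 2 e / (INR (length e) - 1).
Proof.
  intros He. pose proof (handshake_length e He).
  rewrite (expect_one_quadratic e _ (pow_sum 2 e + 2) 2 0 He).
  - field. lra.
  - intros i Hi. rewrite pow_sum_attach by exact Hi. ring.
Qed.

Lemma expect_one_pow_sum_3 e : handshake e ->
  expect 1 e (pow_sum 3) = (pow_sum 3 e + 2)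
    + (3 / 2 * (pow_sum 2 e + pow_sum 3 e)) / (INR (length e) - 1).
Proof.
  intros He. pose proof (handshake_length e He).
  rewrite (expect_one_quadratic e _ (pow_sum 3 e + 2) 3 3 He).
  - field. lra.
  - intros i Hi. rewrite pow_sum_attach by exact Hi. ring.
Qed.

Lemma expect_one_pow_sum_2_sq e : handshake e ->
  expect 1 e (fun e => pow_sum 2 e ^ 2) = (pow_sum 2 e ^ 2 + 4 * pow_sum 2 e + 4)
    + (2 * pow_sum 2 e ^ 2 + 4 * pow_sum 2 e + 2 * pow_sum 3 e) / (INR (length e) - 1).
Proof.
  intros He. pose proof (handshake_length e He).
  rewrite (expect_one_quadratic e _ ((pow_sum 2 e + 2) ^ 2) (4 * (pow_sum 2 e + 2)) 4 He).
  - field. lra.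
  - intros i Hi. rewrite pow_sum_attach by exact Hi. ring.
Qed.

Lemma expect_pow_sum_2 k : expect k T2 (pow_sum 2) = 2 * (INR k + 1) * harmonic (S k).
Proof.
  induction k as [|k IH].
  - unfold pow_sum, lsum, harmonic. simpl. lra.
  - rewrite (expect_S_drift k _ (pow_sum 2) (fun e => pow_sum 2 e + 2))
      by exact expect_one_pow_sum_2.
    rewrite expect_plus, expect_const, IH by exact handshake_T2.
    rewrite (harmonic_S (S k)), !S_INR. pose proof (pos_INR k). field. lra.
Qed.

(* [kappa k = 24 Gamma(k + 5/2) / (Gamma(5/2) k!)], of order [k^(3/2)]. *)
Fixpoint kappa (k : nat) : R :=
  match k with
  | O => 24
  | S j => kappa j * (2 * INR j + 5) / (2 * INR j + 2)
  end.

Lemma expect_pow_sum_3 k :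
  expect k T2 (pow_sum 3) = kappa k - 6 * (INR k + 1) * harmonic (S k) - 16 * (INR k + 1).
Proof.
  induction k as [|k IH].
  - unfold pow_sum, lsum, harmonic. simpl. lra.
  - rewrite (expect_S_drift k _ (fun e => 3 / 2 * (pow_sum 2 e + pow_sum 3 e))
      (fun e => pow_sum 3 e + 2)) by exact expect_one_pow_sum_3.
    rewrite expect_scal, !expect_plus, expect_const, IH, expect_pow_sum_2 by exact handshake_T2.
    rewrite (harmonic_S (S k)). cbn [kappa]. rewrite !S_INR. pose proof (pos_INR k). field. lra.
Qed.

Lemma expect_pow_sum_2_sq k :
  expect k T2 (fun e => pow_sum 2 e ^ 2)
  = (INR k + 2) * (INR k + 1)
      * (16 + 4 * harmonic (S (S k)) ^ 2 - 4 * harmonic2 (S (S k))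
         + 12 * harmonic (S (S k)) / (INR k + 2) - 12 / (INR k + 2) ^ 2 + 48 / (INR k + 2))
    - 4 * kappa k.
Proof.
  induction k as [|k IH].
  - unfold pow_sum, lsum, harmonic, harmonic2. simpl. field.
  - rewrite (expect_S_drift k _
      (fun e => 2 * pow_sum 2 e ^ 2 + 4 * pow_sum 2 e + 2 * pow_sum 3 e)
      (fun e => pow_sum 2 e ^ 2 + 4 * pow_sum 2 e + 4)) by exact expect_one_pow_sum_2_sq.
    rewrite !expect_plus, !expect_scal, expect_const, IH, expect_pow_sum_2, expect_pow_sum_3
      by exact handshake_T2.
    rewrite (harmonic_S (S (S k))), (harmonic2_S (S (S k))), (harmonic_S (S k)).
    cbn [kappa]. rewrite !S_INR. pose proof (pos_INR k). field. lra.
Qed.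

Lemma EZ_closed_form n : (2 <= n)%nat -> EZ n = 2 * (INR n - 1) * (harmonic n - / INR n).
Proof.
  intros Hn. destruct n as [|[|k]]; try lia.
  unfold EZ, En. replace (S (S k) - 2)%nat with k by lia.
  change zagreb with (pow_sum 2). fold T2.
  rewrite expect_pow_sum_2, (harmonic_S (S k)), !S_INR. pose proof (pos_INR k). field. lra.
Qed.

Lemma EZ2_closed_form n : (2 <= n)%nat ->
  EZ2 n = INR n * (INR n - 1) * (16 + 4 * harmonic n ^ 2 - 4 * harmonic2 n
            + 12 * harmonic n / INR n - 12 / INR n ^ 2 + 48 / INR n) - 4 * kappa (n - 2).
Proof.
  intros Hn. destruct n as [|[|k]]; try lia.
  unfold EZ2, En. replace (S (S k) - 2)%nat with k by lia.
  change zagreb with (pow_sum 2). fold T2.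
  rewrite expect_pow_sum_2_sq, !S_INR. pose proof (pos_INR k). field. lra.
Qed.

(* The terms [n^2 H_n^2] of [E[Z_n^2]] and [E[Z_n]^2] cancel exactly. *)
Lemma VarZ_closed_form n : (2 <= n)%nat ->
  VarZ n = let x := INR n in let H := harmonic n in
    (16 - 4 * harmonic2 n) * x * (x - 1) + 4 * (x - 1) * H ^ 2 + 12 * (x - 1) * H
    + 8 * (x - 1) * H * ((x - 1) / x) + 48 * (x - 1)
    - 12 * ((x - 1) / x) - 4 * ((x - 1) / x) ^ 2 - 4 * kappa (n - 2).
Proof.
  intros Hn. unfold VarZ. rewrite EZ2_closed_form, EZ_closed_form by exact Hn.
  assert (0 < INR n) by (apply (lt_INR 0); lia). cbv zeta. field. lra.
Qed.

Lemma kappa_ge0 k : 0 <= kappa k.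
Proof.
  induction k as [|k IH]; cbn [kappa]; [lra|]. pose proof (pos_INR k).
  apply Rdiv_le_0_compat; [apply Rmult_le_pos|]; lra.
Qed.

Lemma kappa_sq_le k : kappa k ^ 2 <= 576 * (INR k + 1) ^ 3.
Proof.
  induction k as [|k IH]; cbn [kappa]; [simpl; lra|].
  rewrite S_INR. pose proof (pos_INR k).
  set (q := (2 * INR k + 5) ^ 2 / (2 * INR k + 2) ^ 2).
  assert (E : (kappa k * (2 * INR k + 5) / (2 * INR k + 2)) ^ 2 = kappa k ^ 2 * q)
    by (unfold q; field; lra).
  assert (Hq : 0 <= q) by (apply Rdiv_le_0_compat; [apply pow2_ge_0 | apply pow_lt; lra]).
  assert (Eq : 576 * (INR k + 1) ^ 3 * q = 144 * (INR k + 1) * (2 * INR k + 5) ^ 2)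
    by (unfold q; field; lra).
  rewrite E. apply Rle_trans with (576 * (INR k + 1) ^ 3 * q).
  - apply Rmult_le_compat_r; assumption.
  - rewrite Eq. nra.
Qed.

Lemma kappa_le n : (2 <= n)%nat -> kappa (n - 2) <= 24 * (INR n * sqrt (INR n)).
Proof.
  intros Hn. pose proof (kappa_ge0 (n - 2)) as Hk0. pose proof (kappa_sq_le (n - 2)) as Hk.
  assert (Hx : 2 <= INR n) by (apply (le_INR 2); exact Hn).
  assert (Hcube : (INR (n - 2) + 1) ^ 3 <= INR n ^ 3)
    by (apply pow_incr; rewrite minus_INR by exact Hn; simpl; lra).
  set (x := INR n) in *. set (h := kappa (n - 2)) in *.
  assert (Hs : sqrt x * sqrt x = x) by (apply sqrt_sqrt; lra).
  pose proof (sqrt_pos x).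
  assert (0 <= x * sqrt x) by nra.
  nra.
Qed.

(** * The Basel sum with a rate *)

Lemma RInt_lincomb3 (f g h : R -> R) c1 c2 c3 a b :
  ex_RInt f a b -> ex_RInt g a b -> ex_RInt h a b ->
  RInt (fun x => c1 * f x + c2 * g x + c3 * h x) a b =
  c1 * RInt f a b + c2 * RInt g a b + c3 * RInt h a b.
Proof.
  intros Hf Hg Hh. apply is_RInt_unique.
  apply (is_RInt_plus (V := R_CompleteNormedModule));
    [apply (is_RInt_plus (V := R_CompleteNormedModule))|];
    apply (is_RInt_scal (V := R_CompleteNormedModule)); apply RInt_correct; assumption.
Qed.

Lemma ex_RInt_derivable (f : R -> R) a b : (forall x, ex_derive f x) -> ex_RInt f a b.
Proof.
  intros Hf. apply (ex_RInt_continuous (V := R_CompleteNormedModule)). intros x _.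
  apply (ex_derive_continuous (K := R_AbsRing) (V := R_NormedModule)). apply Hf.
Qed.

Lemma RInt_antiderivative (F f : R -> R) a b :
  (forall x, is_derive F x (f x)) -> (forall x, ex_derive f x) -> RInt f a b = F b - F a.
Proof.
  intros HF Hf. apply is_RInt_unique, (is_RInt_derive (V := R_CompleteNormedModule)).
  - intros x _. apply HF.
  - intros x _. apply (ex_derive_continuous (K := R_AbsRing) (V := R_NormedModule)). apply Hf.
Qed.

(* [auto_derive] states its equations in a Coquelicot structure; restate
   them in [R] so that [ring] and [field] recognise the goal. *)
Ltac R_eq := match goal with |- @eq _ ?a ?b => change (@eq R a b) end.

Definition wallis_I n : R := RInt (fun x => cos x ^ (2 * n)) 0 (PI / 2).

Definition wallis_J n : R := RInt (fun x => x ^ 2 * cos x ^ (2 * n)) 0 (PI / 2).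

Lemma ex_RInt_wallis_I n : ex_RInt (fun x => cos x ^ (2 * n)) 0 (PI / 2).
Proof. apply ex_RInt_derivable. intros x. auto_derive. exact I. Qed.

Lemma ex_RInt_wallis_J n : ex_RInt (fun x => x ^ 2 * cos x ^ (2 * n)) 0 (PI / 2).
Proof. apply ex_RInt_derivable. intros x. auto_derive. exact I. Qed.

Lemma pow_even_succ c n : c ^ (2 * n + 1) = c ^ (2 * n) * c /\ c ^ (2 * S n) = c ^ (2 * n) * c ^ 2.
Proof. replace (2 * S n)%nat with (2 * n + 2)%nat by lia. split; rewrite pow_add; ring. Qed.

Lemma sin_sq x : sin x ^ 2 = 1 - cos x ^ 2.
Proof. pose proof (sin2_cos2 x) as H. unfold Rsqr in H. lra. Qed.

Lemma wallis_I_S n : 2 * (INR n + 1) * wallis_I (S n) = (2 * INR n + 1) * wallis_I n.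
Proof.
  assert (E : RInt (fun x => 2 * (INR n + 1) * cos x ^ (2 * S n)
      + - (2 * INR n + 1) * cos x ^ (2 * n) + 0 * cos x ^ (2 * n)) 0 (PI / 2) = 0).
  { rewrite (RInt_antiderivative (fun x => sin x * cos x ^ (2 * n + 1))).
    - rewrite cos_PI2, sin_0, pow_i by lia. R_eq. ring.
    - intros x. auto_derive; [exact I|]. R_eq.
      replace (n + (n + 0) + 1)%nat with (2 * n + 1)%nat by lia.
      replace (Init.Nat.pred (2 * n + 1)) with (2 * n)%nat by lia.
      destruct (pow_even_succ (cos x) n) as [-> ->].
      rewrite ?S_INR, ?plus_INR, ?mult_INR, ?S_INR, ?INR_0.
      ring_simplify. rewrite sin_sq. ring.
    - intros x. auto_derive. exact I. }
  rewrite RInt_lincomb3 in E by apply ex_RInt_wallis_I. unfold wallis_I. lra.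
Qed.

Lemma wallis_J_S n :
  wallis_I (S n) + 2 * (INR n + 1) ^ 2 * wallis_J (S n)
  = (INR n + 1) * (2 * INR n + 1) * wallis_J n.
Proof.
  assert (E : RInt (fun x => 1 * cos x ^ (2 * S n)
      + 2 * (INR n + 1) ^ 2 * (x ^ 2 * cos x ^ (2 * S n))
      + - ((INR n + 1) * (2 * INR n + 1)) * (x ^ 2 * cos x ^ (2 * n))) 0 (PI / 2) = 0).
  { rewrite (RInt_antiderivative (fun x => x * cos x ^ (2 * n + 2)
        + (INR n + 1) * (x ^ 2 * sin x * cos x ^ (2 * n + 1)))).
    - rewrite cos_PI2, sin_0, !pow_i by lia. R_eq. ring.
    - intros x. auto_derive; [exact I|]. R_eq.
      replace (n + (n + 0) + 2)%nat with (2 * n + 2)%nat by lia.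
      replace (n + (n + 0) + 1)%nat with (2 * n + 1)%nat by lia.
      replace (Init.Nat.pred (2 * n + 2)) with (2 * n + 1)%nat by lia.
      replace (Init.Nat.pred (2 * n + 1)) with (2 * n)%nat by lia.
      replace (2 * n + 2)%nat with (2 * S n)%nat by lia.
      destruct (pow_even_succ (cos x) n) as [-> ->].
      rewrite ?S_INR, ?plus_INR, ?mult_INR, ?S_INR, ?INR_0.
      ring_simplify. rewrite sin_sq. ring.
    - intros x. auto_derive. exact I. }
  rewrite (RInt_lincomb3 _ _ _ _ _ _ _ _
    (ex_RInt_wallis_I (S n)) (ex_RInt_wallis_J (S n)) (ex_RInt_wallis_J n)) in E.
  unfold wallis_I, wallis_J. lra.
Qed.

Lemma wallis_I_0 : wallis_I 0 = PI / 2.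
Proof.
  unfold wallis_I. rewrite (RInt_antiderivative (fun x => x)).
  - R_eq. ring.
  - intros x. auto_derive; [exact I|]. reflexivity.
  - intros x. auto_derive. exact I.
Qed.

Lemma wallis_J_0 : wallis_J 0 = (PI / 2) ^ 3 / 3.
Proof.
  unfold wallis_J. rewrite (RInt_antiderivative (fun x => x ^ 3 / 3)).
  - R_eq. field.
  - intros x. auto_derive; [exact I|]. R_eq. simpl. field.
  - intros x. auto_derive. exact I.
Qed.

Lemma mul_cos_le_sin x : 0 <= x <= PI -> x * cos x <= sin x.
Proof.
  intros Hx.
  assert (E : RInt (fun t => t * sin t) 0 x = sin x - x * cos x - (sin 0 - 0 * cos 0)).
  { rewrite (RInt_antiderivative (fun t => sin t - t * cos t)); [reflexivity | |].
    - intros t. auto_derive; [exact I|]. R_eq. ring.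
    - intros t. auto_derive. exact I. }
  assert (0 <= RInt (fun t => t * sin t) 0 x).
  { destruct (Req_dec x 0) as [->|Hx0]; [rewrite RInt_point; apply Rle_refl|].
    apply RInt_ge_0; [lra | apply ex_RInt_derivable; intros; auto_derive; exact I |].
    intros t Ht. apply Rmult_le_pos; [lra|]. apply sin_ge_0; lra. }
  rewrite sin_0 in E. lra.
Qed.

Lemma pow_even_ge0 c n : 0 <= c ^ (2 * n).
Proof. rewrite pow_mult. apply pow_le, pow2_ge_0. Qed.

Lemma wallis_I_pos n : 0 < wallis_I n.
Proof.
  induction n as [|n IH].
  - rewrite wallis_I_0. pose proof PI_RGT_0. lra.
  - pose proof (wallis_I_S n). pose proof (pos_INR n). nra.
Qed.

Lemma wallis_J_ge0 n : 0 <= wallis_J n.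
Proof.
  apply RInt_ge_0; [pose proof PI_RGT_0; lra | apply ex_RInt_wallis_J |].
  intros x _. apply Rmult_le_pos; [apply pow2_ge_0 | apply pow_even_ge0].
Qed.

(* From [x cos x <= sin x]: [x^2 cos^(2n+2) x <= sin^2 x cos^(2n) x = cos^(2n) x - cos^(2n+2) x]. *)
Lemma wallis_J_S_le n : wallis_J (S n) <= wallis_I n - wallis_I (S n).
Proof.
  assert (E : RInt (fun x => 1 * cos x ^ (2 * n) + -1 * cos x ^ (2 * S n)
      + 0 * cos x ^ (2 * n)) 0 (PI / 2) = wallis_I n - wallis_I (S n)).
  { rewrite RInt_lincomb3 by apply ex_RInt_wallis_I. unfold wallis_I. R_eq. ring. }
  rewrite <- E. pose proof PI_RGT_0.
  apply RInt_le; [lra | apply ex_RInt_wallis_J | |].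
  { apply ex_RInt_derivable. intros x. auto_derive. exact I. }
  intros x Hx.
  assert (Hc : 0 <= cos x) by (apply cos_ge_0; lra).
  assert (Hxc : 0 <= x * cos x <= sin x) by (split; [nra | apply mul_cos_le_sin; lra]).
  assert (Hsq : (x * cos x) ^ 2 <= sin x ^ 2) by (apply pow_incr; lra).
  destruct (pow_even_succ (cos x) n) as [_ ->]. pose proof (pow_even_ge0 (cos x) n).
  rewrite sin_sq in Hsq. nra.
Qed.

Definition wallis_quot n := wallis_J n / wallis_I n.

Lemma wallis_quot_step n : wallis_quot n - wallis_quot (S n) = / (2 * (INR n + 1) ^ 2).
Proof.
  unfold wallis_quot.
  pose proof (wallis_I_S n). pose proof (wallis_J_S n).
  pose proof (wallis_I_pos n). pose proof (wallis_I_pos (S n)). pose proof (pos_INR n).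
  assert (EI : wallis_I (S n) = (2 * INR n + 1) * wallis_I n / (2 * (INR n + 1)))
    by (field_simplify_eq; lra).
  assert (EJ : wallis_J (S n) = ((INR n + 1) * (2 * INR n + 1) * wallis_J n - wallis_I (S n))
                                / (2 * (INR n + 1) ^ 2)) by (field_simplify_eq; nra).
  rewrite EJ, EI. field. lra.
Qed.

(* Matsuoka's proof of [sum 1/k^2 = PI^2/6]: [wallis_quot] telescopes to the
   partial sums, and [wallis_J_S_le] makes its limit [0] at rate [1/n]. *)
Lemma basel_rate n : (1 <= n)%nat -> 0 <= PI ^ 2 / 6 - harmonic2 n <= 2 / INR n.
Proof.
  intros Hn.
  assert (Htel : forall N, wallis_quot 0 - wallis_quot N = harmonic2 N / 2).
  { induction N as [|N IH]; [unfold harmonic2; simpl; lra|].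
    rewrite harmonic2_S. pose proof (wallis_quot_step N). pose proof (pos_INR N).
    replace (wallis_quot 0 - wallis_quot (S N))
      with (wallis_quot 0 - wallis_quot N + (wallis_quot N - wallis_quot (S N))) by ring.
    rewrite IH, H. field. lra. }
  assert (H0 : wallis_quot 0 = PI ^ 2 / 12).
  { unfold wallis_quot. rewrite wallis_I_0, wallis_J_0. pose proof PI_RGT_0. field. lra. }
  specialize (Htel n). rewrite H0 in Htel.
  destruct n as [|m]; [lia|].
  pose proof (wallis_I_pos m). pose proof (wallis_I_pos (S m)). pose proof (wallis_J_ge0 (S m)).
  pose proof (wallis_J_S_le m). pose proof (wallis_I_S m). pose proof (pos_INR m).
  assert (Hq : 0 <= wallis_quot (S m) <= / (INR m + 1)).
  { unfold wallis_quot. split; [apply Rdiv_le_0_compat; lra|].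
    apply (Rmult_le_reg_r (wallis_I (S m) * (INR m + 1))); [nra|].
    field_simplify; [nra | lra | lra]. }
  rewrite S_INR. unfold Rdiv. lra.
Qed.

(** * Euler's constant with a rate *)

Lemma ln_le_sub_1 y : 0 < y -> ln y <= y - 1.
Proof. intros Hy. pose proof (exp_ineq1_le (ln y)) as H. rewrite exp_ln in H by exact Hy. lra. Qed.

Definition euler_seq n := harmonic n - ln (INR n).

Lemma euler_seq_step n : (1 <= n)%nat ->
  0 <= euler_seq n - euler_seq (S n) <= / INR n - / INR (S n).
Proof.
  intros Hn. unfold euler_seq. rewrite harmonic_S, S_INR.
  assert (Hx : 1 <= INR n) by (apply (le_INR 1); exact Hn).
  assert (Hq : 0 < (INR n + 1) / INR n) by (apply Rdiv_lt_0_compat; lra).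
  assert (E : ln (INR n + 1) = ln (INR n) + ln ((INR n + 1) / INR n)).
  { rewrite <- ln_mult by lra. f_equal. field. lra. }
  assert (Einv : ln (INR n / (INR n + 1)) = - ln ((INR n + 1) / INR n)).
  { rewrite <- ln_Rinv by lra. f_equal. field. lra. }
  pose proof (ln_le_sub_1 _ Hq).
  pose proof (ln_le_sub_1 (INR n / (INR n + 1)) ltac:(apply Rdiv_lt_0_compat; lra)).
  assert ((INR n + 1) / INR n - 1 = / INR n) by (field; lra).
  assert (INR n / (INR n + 1) - 1 = - / (INR n + 1)) by (field; lra).
  lra.
Qed.

Lemma euler_seq_antitone n m : (1 <= n <= m)%nat ->
  0 <= euler_seq n - euler_seq m <= / INR n - / INR m.
Proof.
  intros [Hn Hm]. induction Hm as [|m Hm IH]; [lra|].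
  pose proof (euler_seq_step m ltac:(lia)). lra.
Qed.

Lemma harmonic_le_ln_add_1 n : (1 <= n)%nat -> harmonic n <= ln (INR n) + 1.
Proof.
  intros Hn. pose proof (euler_seq_antitone 1 n ltac:(lia)).
  assert (euler_seq 1 = 1) by (unfold euler_seq, harmonic; simpl; rewrite ln_1; lra).
  unfold euler_seq in *. lra.
Qed.

Lemma euler_gamma_rate g : is_euler_gamma g -> forall n, (1 <= n)%nat ->
  0 <= harmonic n - ln (INR n) - g <= / INR n.
Proof.
  intros Hg n Hn. fold (euler_seq n).
  assert (Hfar : forall e, 0 < e -> exists m, (n <= m)%nat /\ Rabs (euler_seq m - g) < e
                                             /\ 0 < / INR m).
  { intros e He. destruct (Hg e He) as [N HN]. exists (max N n). repeat split; [lia| |].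
    - apply (HN (max N n)). lia.
    - apply Rinv_0_lt_compat, (lt_INR 0). lia. }
  split.
  - destruct (Rle_or_lt 0 (euler_seq n - g)) as [H|H]; [exact H|].
    destruct (Hfar (g - euler_seq n) ltac:(lra)) as [m [Hm [Hd _]]].
    pose proof (euler_seq_antitone n m ltac:(lia)).
    apply Rabs_def2 in Hd. lra.
  - destruct (Rle_or_lt (euler_seq n - g) (/ INR n)) as [H|H]; [exact H|].
    destruct (Hfar (euler_seq n - g - / INR n) ltac:(lra)) as [m [Hm [Hd Hpos]]].
    pose proof (euler_seq_antitone n m ltac:(lia)).
    apply Rabs_def2 in Hd. lra.
Qed.

Lemma euler_gamma_bounds g : is_euler_gamma g -> 0 <= g <= 1.
Proof.
  intros Hg. pose proof (euler_gamma_rate g Hg 1 ltac:(lia)) as H1.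
  unfold harmonic in H1. simpl in H1. rewrite ln_1 in H1. lra.
Qed.

(** * Asymptotics *)

Lemma inv_INR_bounds n : (2 <= n)%nat -> 0 < / INR n <= 1 / 2.
Proof.
  intros Hn. assert (Hx : 2 <= INR n) by (apply (le_INR 2); exact Hn).
  split; [apply Rinv_0_lt_compat; lra|].
  unfold Rdiv. rewrite Rmult_1_l. apply Rinv_le_contravar; lra.
Qed.

Lemma ln_bounds x : 1 <= x -> 0 <= ln x /\ (ln x + 2) ^ 2 <= 28 * sqrt x.
Proof.
  intros Hx.
  set (s := sqrt x). set (t := sqrt s).
  assert (Hs : s * s = x) by (apply sqrt_sqrt; lra).
  assert (Hs1 : 1 <= s) by (rewrite <- sqrt_1; apply sqrt_le_1_alt; lra).
  assert (Ht : t * t = s) by (apply sqrt_sqrt; lra).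
  assert (Ht1 : 1 <= t) by (rewrite <- sqrt_1; apply sqrt_le_1_alt; lra).
  assert (E : ln x = 4 * ln t).
  { rewrite <- Hs, <- Ht. replace (t * t * (t * t)) with (t ^ 4) by ring.
    rewrite ln_pow by lra. simpl. ring. }
  pose proof (ln_le_sub_1 t ltac:(lra)) as Hup.
  pose proof (ln_le_sub_1 (/ t) ltac:(apply Rinv_0_lt_compat; lra)) as Hlow.
  rewrite ln_Rinv in Hlow by lra.
  assert (/ t <= 1) by (rewrite <- Rinv_1; apply Rinv_le_contravar; lra).
  rewrite E. split; nra.
Qed.

Lemma VarZ_estimate n : (2 <= n)%nat ->
  Rabs (VarZ n - (16 - 2 * PI ^ 2 / 3) * INR n ^ 2) <= 600 * (INR n * sqrt (INR n)).
Proof.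
  intros Hn. rewrite VarZ_closed_form by exact Hn. cbv zeta.
  pose proof (basel_rate n ltac:(lia)) as Hb.
  pose proof (harmonic_le_ln_add_1 n ltac:(lia)) as HH.
  pose proof (kappa_le n Hn) as Hk. pose proof (kappa_ge0 (n - 2)) as Hk0.
  assert (Hx : 2 <= INR n) by (apply (le_INR 2); exact Hn).
  pose proof (ln_bounds (INR n) ltac:(lra)) as [HL0 HL].
  pose proof (harmonic_ge0 n) as HH0. pose proof (inv_INR_bounds n Hn) as Hinv.
  set (x := INR n) in *. set (s := sqrt x) in *. set (L := ln x) in *.
  set (H := harmonic n) in *. set (Q := harmonic2 n) in *. set (h := kappa (n - 2)) in *.
  assert (Hs1 : 1 <= s) by (unfold s; rewrite <- sqrt_1; apply sqrt_le_1_alt; lra).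
  assert (Hq : 0 <= (x - 1) / x <= 1)
    by (replace ((x - 1) / x) with (1 - / x) by (field; lra); lra).
  assert (Hdel : 0 <= x * (PI ^ 2 / 6 - Q) <= 2).
  { split; [nra|]. replace 2 with (x * (2 / x)) by (field; lra). apply Rmult_le_compat_l; lra. }
  assert (Hpi : 0 <= 16 - 2 * PI ^ 2 / 3 <= 16)
    by (pose proof PI_4; pose proof PI_RGT_0; split; nra).
  assert (Hxs : x <= x * s) by nra.
  assert (HxH : 0 <= (x - 1) * H <= x * (L + 1)) by (split; nra).
  assert (HxH2 : 0 <= (x - 1) * H ^ 2 <= x * (L + 1) ^ 2).
  { assert (H ^ 2 <= (L + 1) ^ 2) by (apply pow_incr; lra). split; nra. }
  assert (HxHq : 0 <= (x - 1) * H * ((x - 1) / x) <= (x - 1) * H) by (split; nra).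
  assert (Hpos : 0 <= 4 * (x - 1) * H ^ 2 + 12 * (x - 1) * H + 8 * (x - 1) * H * ((x - 1) / x)
                      <= 20 * x * (L + 2) ^ 2) by (split; nra).
  assert (HxL : x * (L + 2) ^ 2 <= 28 * (x * s)) by nra.
  assert (Hdx : 0 <= (x - 1) * (x * (PI ^ 2 / 6 - Q)) <= 2 * x) by (split; nra).
  assert (Hq2 : 0 <= ((x - 1) / x) ^ 2 <= 1) by (split; nra).
  assert (Hc : 0 <= (16 - 2 * PI ^ 2 / 3) * x <= 16 * x) by (split; nra).
  match goal with |- Rabs ?e <= _ =>
    replace e with (4 * ((x - 1) * (x * (PI ^ 2 / 6 - Q))) - (16 - 2 * PI ^ 2 / 3) * x
      + (4 * (x - 1) * H ^ 2 + 12 * (x - 1) * H + 8 * (x - 1) * H * ((x - 1) / x))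
      + 48 * (x - 1) - 12 * ((x - 1) / x) - 4 * ((x - 1) / x) ^ 2 - 4 * h) by (field; lra)
  end.
  apply Rabs_le. lra.
Qed.

Lemma EZ_estimate g n : is_euler_gamma g -> (2 <= n)%nat ->
  Rabs (EZ n - 2 * INR n * (ln (INR n) + g)) <= 2 * (ln (INR n) + 2).
Proof.
  intros Hg Hn. rewrite EZ_closed_form by exact Hn.
  pose proof (euler_gamma_rate g Hg n ltac:(lia)) as He.
  pose proof (harmonic_le_ln_add_1 n ltac:(lia)) as HH. pose proof (harmonic_ge0 n).
  assert (Hx : 2 <= INR n) by (apply (le_INR 2); exact Hn).
  pose proof (ln_bounds (INR n) ltac:(lra)) as [HL _].
  pose proof (inv_INR_bounds n Hn) as Hinv.
  assert (Hxe : 0 <= INR n * (harmonic n - ln (INR n) - g) <= 1).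
  { split; [nra|]. replace 1 with (INR n * / INR n) by (field; lra). apply Rmult_le_compat_l; lra. }
  replace (2 * (INR n - 1) * (harmonic n - / INR n) - 2 * INR n * (ln (INR n) + g))
    with (2 * (INR n * (harmonic n - ln (INR n) - g)) - 2 * harmonic n - 2 + 2 * / INR n)
    by (field; lra).
  apply Rabs_le. lra.
Qed.

Lemma EZ2_estimate g n : is_euler_gamma g -> (2 <= n)%nat ->
  Rabs (EZ2 n - (4 * (INR n * ln (INR n)) ^ 2 + 8 * g * INR n ^ 2 * ln (INR n)
                 + (16 + 4 * g ^ 2 - 2 * PI ^ 2 / 3) * INR n ^ 2))
  <= 1000 * (INR n * sqrt (INR n)).
Proof.
  intros Hg Hn.
  pose proof (VarZ_estimate n Hn) as HV. pose proof (EZ_estimate g n Hg Hn) as HE.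
  pose proof (euler_gamma_bounds g Hg) as Hg01.
  assert (Hx : 2 <= INR n) by (apply (le_INR 2); exact Hn).
  pose proof (ln_bounds (INR n) ltac:(lra)) as [HL0 HL].
  unfold VarZ in HV.
  set (x := INR n) in *. set (s := sqrt x) in *. set (L := ln x) in *.
  set (a := 2 * x * (L + g)) in *.
  assert (Ha : 0 <= a <= 2 * x * (L + 1)) by (unfold a; split; nra).
  assert (HEa : Rabs (EZ n + a) <= 2 * (L + 2) + 4 * x * (L + 1)).
  { replace (EZ n + a) with (EZ n - a + 2 * a) by ring.
    eapply Rle_trans; [apply Rabs_triang|]. rewrite (Rabs_right (2 * a)) by lra. lra. }
  assert (Hprod : Rabs ((EZ n - a) * (EZ n + a)) <= 12 * x * (L + 2) ^ 2).
  { rewrite Rabs_mult.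
    apply Rle_trans with (2 * (L + 2) * (2 * (L + 2) + 4 * x * (L + 1))).
    - apply Rmult_le_compat; [apply Rabs_pos | apply Rabs_pos | exact HE | exact HEa].
    - nra. }
  assert (HxL : x * (L + 2) ^ 2 <= 28 * (x * s)) by nra.
  assert (0 <= x * s) by (pose proof (sqrt_pos x); nra).
  replace (EZ2 n - (4 * (x * L) ^ 2 + 8 * g * x ^ 2 * L
                    + (16 + 4 * g ^ 2 - 2 * PI ^ 2 / 3) * x ^ 2))
    with ((EZ2 n - EZ n ^ 2 - (16 - 2 * PI ^ 2 / 3) * x ^ 2) + (EZ n - a) * (EZ n + a))
    by (unfold a; field).
  eapply Rle_trans; [apply Rabs_triang|]. lra.
Qed.

Theorem proposition4p2 (gamma : R) (hg : is_euler_gamma gamma) :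
  (exists C N, forall n : nat, (N <= n)%nat ->
     Rabs (EZ2 n
           - (4 * (INR n * ln (INR n)) ^ 2
              + 8 * gamma * INR n ^ 2 * ln (INR n)
              + (16 + 4 * gamma ^ 2 - 2 * PI ^ 2 / 3) * INR n ^ 2))
     <= C * (INR n * sqrt (INR n)))
  /\
  (exists C N, forall n : nat, (N <= n)%nat ->
     Rabs (VarZ n - (16 - 2 * PI ^ 2 / 3) * INR n ^ 2)
     <= C * (INR n * sqrt (INR n))).
Proof.
  split.
  - exists 1000, 2%nat. intros n Hn. exact (EZ2_estimate gamma n hg Hn).
  - exists 600, 2%nat. intros n Hn. exact (VarZ_estimate n Hn).
Qed.
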